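(* Let $\mathbb C$ be a homological category with finite colimits, and let $x\colon X\to A$, $y\colon Y\to A$ be morphisms whose images are normal monomorphisms. Then the following are equivalent: (a) the span $A/X\leftarrow A\to A/Y$ admits an internal pregroupoid structure; (b) the span $A/X\leftarrow A\to A/Y$ admits a unique internal pregroupoid structure; (c) $[(X,x),(Y,y)]_1=0$.
   Context: A homological category is a regular pointed category in which the Split Short Five Lemma holds; images are taken in the (regular epi, mono) factorization; a normal monomorphism is a kernel of some morphism. Notation: $\iota_i$ coproduct injections, $[a,b,c]$ copairing, $\langle\cdot\rangle$ pairing. $A_3=A\times_{A/X}A\times_{A/Y}A$ is the limit of $A\xrightarrow{\mathsf{coker}(x)}A/X\xleftarrow{\mathsf{coker}(x)}A\xrightarrow{\mathsf{coker}(y)}A/Y\xleftarrow{\mathsf{coker}(y)}A$. An internal pregroupoid structure on the span $A/X\leftarrow A\to A/Y$ is a morphism $p\colon A_3\to A$ with $p\langle\pi_1,\pi_2,\pi_2\rangle=\pi_1$ on $A\times_{A/X}A$ and $p\langle\pi_1,\pi_1,\pi_2\rangle=\pi_2$ on $A\times_{A/Y}A$ ($\pi_1,\pi_2$ the kernel-pair projections). $[(X,x),(Y,y)]_1$ denotes the $1$-weighted subobject commutator: the image under $[1_A,x,y]\colon A+X+Y\to A$ of the kernel of $\langle [\iota_1,\iota_2,0],[\iota_1,0,\iota_2]\rangle\colon A+X+Y\to (A+X)\times_A(A+Y)$, where $(A+X)\times_A(A+Y)$ is the pullback of $[1,0]\colon A+X\to A$ and $[1,0]\colon A+Y\to A$;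 ''$=0$'' means it is the zero subobject. *)

Set Implicit Arguments.
Unset Strict Implicit.

Record Category := {
  Ob :> Type;
  Hom : Ob -> Ob -> Type;
  idm : forall A, Hom A A;
  comp : forall A B D, Hom B D -> Hom A B -> Hom A D;
  comp_idl : forall A B (f : Hom A B), comp (idm B) f = f;
  comp_idr : forall A B (f : Hom A B), comp f (idm A) = f;
  comp_assoc : forall A B D E (h : Hom D E) (g : Hom B D) (f : Hom A B),
      comp h (comp g f) = comp (comp h g) f
}.

Arguments Hom {c} _ _.
Arguments idm {c} _.
Arguments comp {c A B D} _ _.
Notation "g ∘ f" := (comp g f) (at level 40, left associativity).

Section Cat.
Variable C : Category.

Definition mono {B D : C} (m : Hom B D) : Prop :=
  forall Z (g h : Hom Z B), m ∘ g = m ∘ h -> g = h.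

Definition is_iso {A B : C} (f : Hom A B) : Prop :=
  exists g : Hom B A, g ∘ f = idm A /\ f ∘ g = idm B.

Definition is_terminal (T : C) : Prop := forall A : C, exists! u : Hom A T, True.
Definition is_initial (I : C) : Prop := forall A : C, exists! u : Hom I A, True.
Definition is_zero_obj (Z : C) : Prop := is_initial Z /\ is_terminal Z.

Definition pointed : Prop := exists Z : C, is_zero_obj Z.

Definition is_zero_arrow {A B : C} (f : Hom A B) : Prop :=
  exists Z : C, is_zero_obj Z /\ exists (u : Hom A Z) (v : Hom Z B), f = v ∘ u.

Definition is_pullback {A B D P : C} (f : Hom A D) (g : Hom B D)
    (p1 : Hom P A) (p2 : Hom P B) : Prop :=
  f ∘ p1 = g ∘ p2 /\
  forall Q (q1 : Hom Q A) (q2 : Hom Q B), f ∘ q1 = g ∘ q2 ->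
    exists! u : Hom Q P, p1 ∘ u = q1 /\ p2 ∘ u = q2.

Definition has_finite_limits : Prop :=
  (exists T : C, is_terminal T) /\
  (forall A B D (f : Hom A D) (g : Hom B D),
      exists P (p1 : Hom P A) (p2 : Hom P B), is_pullback f g p1 p2).

Definition is_kernel {K A B : C} (k : Hom K A) (f : Hom A B) : Prop :=
  is_zero_arrow (f ∘ k) /\
  forall Z (g : Hom Z A), is_zero_arrow (f ∘ g) -> exists! u : Hom Z K, k ∘ u = g.

Definition normal_mono {B D : C} (m : Hom B D) : Prop :=
  exists E (g : Hom D E), is_kernel m g.

Definition is_coequalizer {A B Q : C} (f g : Hom A B) (q : Hom B Q) : Prop :=
  q ∘ f = q ∘ g /\
  forall Z (h : Hom B Z), h ∘ f = h ∘ g -> exists! u : Hom Q Z, u ∘ q = h.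

Definition is_cokernel {A B Q : C} (f : Hom A B) (q : Hom B Q) : Prop :=
  is_zero_arrow (q ∘ f) /\
  forall Z (g : Hom B Z), is_zero_arrow (g ∘ f) -> exists! u : Hom Q Z, u ∘ q = g.

Definition is_coproduct {A B S : C} (i1 : Hom A S) (i2 : Hom B S) : Prop :=
  forall Z (f : Hom A Z) (g : Hom B Z),
    exists! u : Hom S Z, u ∘ i1 = f /\ u ∘ i2 = g.

Definition is_coproduct3 {A B D S : C} (i1 : Hom A S) (i2 : Hom B S) (i3 : Hom D S)
  : Prop :=
  forall Z (f : Hom A Z) (g : Hom B Z) (h : Hom D Z),
    exists! u : Hom S Z, u ∘ i1 = f /\ u ∘ i2 = g /\ u ∘ i3 = h.

Definition has_finite_colimits : Prop :=
  (exists I : C, is_initial I) /\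
  (forall A B : C, exists S (i1 : Hom A S) (i2 : Hom B S), is_coproduct i1 i2) /\
  (forall A B (f g : Hom A B), exists Q (q : Hom B Q), is_coequalizer f g q).

Definition is_regular_epi {B D : C} (e : Hom B D) : Prop :=
  exists K (f g : Hom K B), is_coequalizer f g e.

Definition regular : Prop :=
  has_finite_limits /\
  (forall A B (f : Hom A B) P (p1 p2 : Hom P A), is_pullback f f p1 p2 ->
      exists Q (q : Hom A Q), is_coequalizer p1 p2 q) /\
  (forall A B D (f : Hom A D) (e : Hom B D) P (p1 : Hom P A) (p2 : Hom P B),
      is_pullback f e p1 p2 -> is_regular_epi e -> is_regular_epi p1).

Definition split_short_five : Prop :=
  forall (K A B K' A' B' : C)
    (k : Hom K A) (p : Hom A B) (s : Hom B A)
    (k' : Hom K' A') (p' : Hom A' B') (s' : Hom B' A')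
    (u : Hom K K') (v : Hom A A') (w : Hom B B'),
    p ∘ s = idm B -> is_kernel k p ->
    p' ∘ s' = idm B' -> is_kernel k' p' ->
    v ∘ k = k' ∘ u -> p' ∘ v = w ∘ p -> v ∘ s = s' ∘ w ->
    is_iso u -> is_iso w -> is_iso v.

Definition homological : Prop := pointed /\ regular /\ split_short_five.

Definition image_factorization {A B I : C} (f : Hom A B) (e : Hom A I) (m : Hom I B)
  : Prop := f = m ∘ e /\ is_regular_epi e /\ mono m.

Definition image_is_normal_mono {A B : C} (f : Hom A B) : Prop :=
  exists I (e : Hom A I) (m : Hom I B), image_factorization f e m /\ normal_mono m.

(* (A3; a1,a2,a3) is the limit of  A -qx-> A/X <-qx- A -qy-> A/Y <-qy- A *)
Definition is_A3 {A QX QY A3 : C} (qx : Hom A QX) (qy : Hom A QY)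
    (a1 a2 a3 : Hom A3 A) : Prop :=
  qx ∘ a1 = qx ∘ a2 /\ qy ∘ a2 = qy ∘ a3 /\
  forall Z (b1 b2 b3 : Hom Z A), qx ∘ b1 = qx ∘ b2 -> qy ∘ b2 = qy ∘ b3 ->
    exists! u : Hom Z A3, a1 ∘ u = b1 /\ a2 ∘ u = b2 /\ a3 ∘ u = b3.

(* p ∘ <π1,π2,π2> = π1 on A x_{A/X} A and p ∘ <π1,π1,π2> = π2 on A x_{A/Y} A;
   the pairings <...> are the unique induced maps into A3, characterised by
   their components. *)
Definition is_pregroupoid_structure {A A3 PX PY : C}
    (a1 a2 a3 : Hom A3 A) (px1 px2 : Hom PX A) (py1 py2 : Hom PY A)
    (p : Hom A3 A) : Prop :=
  (forall t : Hom PX A3, a1 ∘ t = px1 -> a2 ∘ t = px2 -> a3 ∘ t = px2 ->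
      p ∘ t = px1) /\
  (forall t : Hom PY A3, a1 ∘ t = py1 -> a2 ∘ t = py1 -> a3 ∘ t = py2 ->
      p ∘ t = py2).

(* For any choice of the cokernels A/X, A/Y, of A3 and of the kernel pairs,
   a pregroupoid structure exists. *)
Definition admits_pregroupoid {X Y A : C} (x : Hom X A) (y : Hom Y A) : Prop :=
  forall QX (qx : Hom A QX) QY (qy : Hom A QY),
    is_cokernel x qx -> is_cokernel y qy ->
  forall A3 (a1 a2 a3 : Hom A3 A), is_A3 qx qy a1 a2 a3 ->
  forall PX (px1 px2 : Hom PX A), is_pullback qx qx px1 px2 ->
  forall PY (py1 py2 : Hom PY A), is_pullback qy qy py1 py2 ->
  exists p : Hom A3 A, is_pregroupoid_structure a1 a2 a3 px1 px2 py1 py2 p.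

Definition admits_unique_pregroupoid {X Y A : C} (x : Hom X A) (y : Hom Y A)
  : Prop :=
  forall QX (qx : Hom A QX) QY (qy : Hom A QY),
    is_cokernel x qx -> is_cokernel y qy ->
  forall A3 (a1 a2 a3 : Hom A3 A), is_A3 qx qy a1 a2 a3 ->
  forall PX (px1 px2 : Hom PX A), is_pullback qx qx px1 px2 ->
  forall PY (py1 py2 : Hom PY A), is_pullback qy qy py1 py2 ->
  exists! p : Hom A3 A, is_pregroupoid_structure a1 a2 a3 px1 px2 py1 py2 p.

Definition commutator1_is_zero {X Y A : C} (x : Hom X A) (y : Hom Y A) : Prop :=
  forall S (i1 : Hom A S) (i2 : Hom X S) (i3 : Hom Y S), is_coproduct3 i1 i2 i3 ->
  forall SX (j1 : Hom A SX) (j2 : Hom X SX), is_coproduct j1 j2 ->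
  forall SY (l1 : Hom A SY) (l2 : Hom Y SY), is_coproduct l1 l2 ->
  forall (rX : Hom SX A), rX ∘ j1 = idm A -> is_zero_arrow (rX ∘ j2) ->
  forall (rY : Hom SY A), rY ∘ l1 = idm A -> is_zero_arrow (rY ∘ l2) ->
  forall P (pr1 : Hom P SX) (pr2 : Hom P SY), is_pullback rX rY pr1 pr2 ->
  forall (phi : Hom S P),
    pr1 ∘ phi ∘ i1 = j1 -> pr1 ∘ phi ∘ i2 = j2 -> is_zero_arrow (pr1 ∘ phi ∘ i3) ->
    pr2 ∘ phi ∘ i1 = l1 -> is_zero_arrow (pr2 ∘ phi ∘ i2) -> pr2 ∘ phi ∘ i3 = l2 ->
  forall K (k : Hom K S), is_kernel k phi ->
  forall (c : Hom S A), c ∘ i1 = idm A -> c ∘ i2 = x -> c ∘ i3 = y ->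
  exists I (e : Hom K I) (m : Hom I A),
    image_factorization (c ∘ k) e m /\ is_zero_obj I.

End Cat.

(* Let φ : A+X+Y → T = (A+X) ×_A (A+Y) be the comparison map, θ : T → A3 the map
   ⟨[1,x] π1, [1,0] π1, [1,y] π2⟩, and α : A+X → A ×_{A/X} A, β : A+Y → A ×_{A/Y} A the
   maps ⟨[1,x], [1,0]⟩ and ⟨[1,0], [1,y]⟩. In a homological category a subobject that contains
   a section of a split epimorphism together with its kernel is the whole object (split short
   five lemma). T and A3 ≅ (A ×_{A/X} A) ×_A (A ×_{A/Y} A) are split pullbacks of this kind, and
   the images of x and y are the kernels of A → A/X and A → A/Y; hence α, β, φ and θ are
   regular epimorphisms, i.e. cokernels of their kernels.
   A pregroupoid structure p satisfies p θ φ = [1,x,y], which therefore vanishes on ker φ: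
   the commutator is trivial. Conversely, if [1,x,y] vanishes on ker φ it factors as q φ, then
   q vanishes on ker θ and factors as p θ, and the pregroupoid identities for p follow after
   precomposition with the epimorphisms α and β. Uniqueness holds because the two standard
   sections A ×_{A/X} A → A3 and A ×_{A/Y} A → A3 are jointly epimorphic. *)

From Stdlib Require Import ClassicalEpsilon.
Set Implicit Arguments.
Unset Strict Implicit.

Section UniversalProperties.
Variable C : Category.

Lemma pullback_hom_ext {A B D P : C} (f : Hom A D) (g : Hom B D) (p1 : Hom P A) (p2 : Hom P B) :
  is_pullback f g p1 p2 ->
  forall Q (u v : Hom Q P), p1 ∘ u = p1 ∘ v -> p2 ∘ u = p2 ∘ v -> u = v.
Proof.
  intros [Hc H] Q u v E1 E2.
  destruct (H Q (p1 ∘ u) (p2 ∘ u)) as [w [_ Hw]].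
  { rewrite !comp_assoc, Hc; reflexivity. }
  transitivity w; [symmetry|]; apply Hw; auto.
Qed.

Lemma pullback_lift {A B D P : C} (f : Hom A D) (g : Hom B D) (p1 : Hom P A) (p2 : Hom P B) :
  is_pullback f g p1 p2 -> forall Q (q1 : Hom Q A) (q2 : Hom Q B), f ∘ q1 = g ∘ q2 ->
  exists u, p1 ∘ u = q1 /\ p2 ∘ u = q2.
Proof. intros [_ H] Q q1 q2 E. destruct (H Q q1 q2 E) as [u [Hu _]]. eauto. Qed.

Lemma pullback_sym {A B D P : C} (f : Hom A D) (g : Hom B D) (p1 : Hom P A) (p2 : Hom P B) :
  is_pullback f g p1 p2 -> is_pullback g f p2 p1.
Proof.
  intros [Hc H]. split; [auto|]. intros Q q1 q2 E.
  destruct (H Q q2 q1 (eq_sym E)) as [u [[H1 H2] Hu]].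
  exists u; split; [auto|]. intros v [? ?]; apply Hu; auto.
Qed.

Lemma pullback_diagonal {A B P : C} (f : Hom A B) (p1 p2 : Hom P A) :
  is_pullback f f p1 p2 -> exists d, p1 ∘ d = idm A /\ p2 ∘ d = idm A.
Proof. intros Hp. exact (pullback_lift Hp (q1 := idm A) (q2 := idm A) eq_refl). Qed.

Lemma A3_hom_ext {A QX QY A3 : C} (qx : Hom A QX) (qy : Hom A QY) (a1 a2 a3 : Hom A3 A) :
  is_A3 qx qy a1 a2 a3 -> forall Z (u v : Hom Z A3),
  a1 ∘ u = a1 ∘ v -> a2 ∘ u = a2 ∘ v -> a3 ∘ u = a3 ∘ v -> u = v.
Proof.
  intros [H1 [H2 H]] Z u v E1 E2 E3.
  destruct (H Z (a1 ∘ u) (a2 ∘ u) (a3 ∘ u)) as [w [_ Hw]].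
  { rewrite !comp_assoc, H1; reflexivity. }
  { rewrite !comp_assoc, H2; reflexivity. }
  transitivity w; [symmetry|]; apply Hw; auto.
Qed.

Lemma A3_lift {A QX QY A3 : C} (qx : Hom A QX) (qy : Hom A QY) (a1 a2 a3 : Hom A3 A) :
  is_A3 qx qy a1 a2 a3 -> forall Z (b1 b2 b3 : Hom Z A),
  qx ∘ b1 = qx ∘ b2 -> qy ∘ b2 = qy ∘ b3 ->
  exists u, a1 ∘ u = b1 /\ a2 ∘ u = b2 /\ a3 ∘ u = b3.
Proof.
  intros [_ [_ H]] Z b1 b2 b3 E1 E2. destruct (H Z b1 b2 b3 E1 E2) as [u [Hu _]]; eauto.
Qed.

Lemma coproduct_hom_ext {A B S : C} (i1 : Hom A S) (i2 : Hom B S) : is_coproduct i1 i2 ->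
  forall Z (u v : Hom S Z), u ∘ i1 = v ∘ i1 -> u ∘ i2 = v ∘ i2 -> u = v.
Proof.
  intros H Z u v E1 E2. destruct (H Z (u ∘ i1) (u ∘ i2)) as [w [_ Hw]].
  transitivity w; [symmetry|]; apply Hw; auto.
Qed.

Lemma coproduct_copair {A B S : C} (i1 : Hom A S) (i2 : Hom B S) : is_coproduct i1 i2 ->
  forall Z (f : Hom A Z) (g : Hom B Z), exists u, u ∘ i1 = f /\ u ∘ i2 = g.
Proof. intros H Z f g. destruct (H Z f g) as [u [Hu _]]; eauto. Qed.

Lemma coproduct3_hom_ext {A B D S : C} (i1 : Hom A S) (i2 : Hom B S) (i3 : Hom D S) :
  is_coproduct3 i1 i2 i3 -> forall Z (u v : Hom S Z),
  u ∘ i1 = v ∘ i1 -> u ∘ i2 = v ∘ i2 -> u ∘ i3 = v ∘ i3 -> u = v.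
Proof.
  intros H Z u v E1 E2 E3. destruct (H Z (u ∘ i1) (u ∘ i2) (u ∘ i3)) as [w [_ Hw]].
  transitivity w; [symmetry|]; apply Hw; auto.
Qed.

Lemma coproduct3_copair {A B D S : C} (i1 : Hom A S) (i2 : Hom B S) (i3 : Hom D S) :
  is_coproduct3 i1 i2 i3 ->
  forall Z (f : Hom A Z) (g : Hom B Z) (h : Hom D Z), exists u, u ∘ i1 = f /\ u ∘ i2 = g /\ u ∘ i3 = h.
Proof. intros H Z f g h. destruct (H Z f g h) as [u [Hu _]]; eauto. Qed.

Lemma coequalizer_epi {A B Q : C} (f g : Hom A B) (q : Hom B Q) : is_coequalizer f g q ->
  forall Z (u v : Hom Q Z), u ∘ q = v ∘ q -> u = v.
Proof.
  intros [Hc H] Z u v E. destruct (H Z (u ∘ q)) as [w [_ Hw]].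
  { rewrite <- !comp_assoc, Hc; reflexivity. }
  transitivity w; [symmetry|]; apply Hw; auto.
Qed.

Lemma regular_epi_epi {B D : C} (e : Hom B D) : is_regular_epi e ->
  forall Z (u v : Hom D Z), u ∘ e = v ∘ e -> u = v.
Proof. intros [K [f [g H]]]. eapply coequalizer_epi; eauto. Qed.

Lemma regular_epi_mono_diagonal {B D M W : C} (e : Hom B D) (m : Hom M W) (a : Hom B M) (b : Hom D W) :
  is_regular_epi e -> mono m -> m ∘ a = b ∘ e -> exists d, m ∘ d = b.
Proof.
  intros [K [f [g [Hc H]]]] Hm E.
  destruct (H M a) as [d [Hd _]].
  { apply Hm. rewrite !comp_assoc, E, <- !comp_assoc, Hc; reflexivity. }
  exists d. eapply coequalizer_epi. { split; [exact Hc | exact H]. }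
  rewrite <- comp_assoc, Hd, E; reflexivity.
Qed.

Lemma coequalizer_comp_iso {A B Q Q' : C} (f g : Hom A B) (q : Hom B Q) (m : Hom Q Q') :
  is_coequalizer f g q -> is_iso m -> is_coequalizer f g (m ∘ q).
Proof.
  intros [Hc H] [n [Hn1 Hn2]]. split.
  - rewrite <- !comp_assoc, Hc; auto.
  - intros Z h Eh. destruct (H Z h Eh) as [u [Hu Hu']]. exists (u ∘ n). split.
    + rewrite <- comp_assoc, (comp_assoc n m q), Hn1, comp_idl; auto.
    + intros v Hv. rewrite (Hu' (v ∘ m)).
      * rewrite <- comp_assoc, Hn2, comp_idr; auto.
      * rewrite <- comp_assoc; auto.
Qed.

Lemma iso_idm (A : C) : is_iso (idm A).
Proof. exists (idm A); split; apply comp_idl. Qed.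

Lemma comp_eq_r {A B D E : C} (f : Hom B D) (g : Hom A B) (h : Hom A D) :
  f ∘ g = h -> forall (u : Hom E A), f ∘ (g ∘ u) = h ∘ u.
Proof. intros H u; rewrite comp_assoc, H; auto. Qed.

Lemma comp3_eq_r {A B D E F : C} (f : Hom D E) (g : Hom B D) (k : Hom A B) (h : Hom A E) :
  f ∘ (g ∘ k) = h -> forall (u : Hom F A), f ∘ (g ∘ (k ∘ u)) = h ∘ u.
Proof. intros H u; rewrite (comp_assoc g k u), comp_assoc, H; auto. Qed.

End UniversalProperties.

(* Composites are kept right-associated; [rewrite_comp H] rewrites [H : f ∘ g = h]
   (or [f ∘ (g ∘ k) = h]) inside such a composite. *)
Ltac rassoc := repeat rewrite <- comp_assoc; rewrite ?comp_idl, ?comp_idr.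
Tactic Notation "rassoc" "in" hyp(H) := repeat rewrite <- comp_assoc in H.
Ltac rewrite_comp H :=
  first [rewrite (comp3_eq_r H) | rewrite (comp_eq_r H) | rewrite H]; rassoc.

Section PointedFiniteLimits.
Variable C : Category.
Hypothesis Hpt : pointed C.

Lemma zero_obj_hom_to_ext {Z : C} : is_zero_obj Z -> forall A (u v : Hom A Z), u = v.
Proof.
  intros [_ Ht] A u v. destruct (Ht A) as [w [_ Hw]].
  transitivity w; [symmetry|]; apply Hw; auto.
Qed.

Lemma zero_obj_hom_from_ext {Z : C} : is_zero_obj Z -> forall A (u v : Hom Z A), u = v.
Proof.
  intros [Hi _] A u v. destruct (Hi A) as [w [_ Hw]].
  transitivity w; [symmetry|]; apply Hw; auto.
Qed.

Lemma zero_obj_hom_to {Z : C} : is_zero_obj Z -> forall A, exists u : Hom A Z, True.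
Proof. intros [_ Ht] A. destruct (Ht A) as [w _]; eauto. Qed.

Lemma zero_obj_hom_from {Z : C} : is_zero_obj Z -> forall A, exists u : Hom Z A, True.
Proof. intros [Hi _] A. destruct (Hi A) as [w _]; eauto. Qed.

Lemma zero_arrow_through {A B Z : C} (u : Hom A Z) (v : Hom Z B) :
  is_zero_obj Z -> is_zero_arrow (v ∘ u).
Proof. intros HZ. exists Z; split; eauto. Qed.

Lemma zero_arrow_exists (A B : C) : exists f : Hom A B, is_zero_arrow f.
Proof.
  destruct Hpt as [Z HZ].
  destruct (zero_obj_hom_to HZ A) as [u _], (zero_obj_hom_from HZ B) as [v _].
  exists (v ∘ u). apply zero_arrow_through; auto.
Qed.

Lemma zero_arrow_unique {A B : C} (f g : Hom A B) :
  is_zero_arrow f -> is_zero_arrow g -> f = g.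
Proof.
  intros [Z [HZ [u [v ->]]]] [Z' [HZ' [u' [v' ->]]]].
  destruct (zero_obj_hom_from HZ Z') as [h _].
  rewrite (zero_obj_hom_to_ext HZ' u' (h ∘ u)), (zero_obj_hom_from_ext HZ v (v' ∘ h)),
    comp_assoc; reflexivity.
Qed.

Lemma zero_arrow_postcomp {A B D : C} (f : Hom A B) (g : Hom B D) :
  is_zero_arrow f -> is_zero_arrow (g ∘ f).
Proof.
  intros [Z [HZ [u [v ->]]]]. exists Z; split; auto. exists u, (g ∘ v). apply comp_assoc.
Qed.

Lemma zero_arrow_precomp {A B D : C} (f : Hom B D) (g : Hom A B) :
  is_zero_arrow f -> is_zero_arrow (f ∘ g).
Proof.
  intros [Z [HZ [u [v ->]]]]. exists Z; split; auto. exists (u ∘ g), v.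
  symmetry; apply comp_assoc.
Qed.

Lemma zero_arrow_precomp_assoc {A B D E : C} (f : Hom B D) (g : Hom A B) (u : Hom E A) :
  is_zero_arrow (f ∘ g) -> is_zero_arrow (f ∘ (g ∘ u)).
Proof. intros H; rewrite comp_assoc; apply zero_arrow_precomp; auto. Qed.

Definition zero_hom (A B : C) : Hom A B :=
  proj1_sig (constructive_indefinite_description _ (zero_arrow_exists A B)).

Lemma zero_hom_zero (A B : C) : is_zero_arrow (zero_hom A B).
Proof. unfold zero_hom. destruct constructive_indefinite_description; auto. Qed.

Lemma kernel_mono {K A B : C} (k : Hom K A) (f : Hom A B) : is_kernel k f -> mono k.
Proof.
  intros [Hz H] Z g h E. destruct (H Z (k ∘ g)) as [w [_ Hw]].
  { rewrite comp_assoc. apply zero_arrow_precomp; auto. }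
  transitivity w; [symmetry|]; apply Hw; auto.
Qed.

Lemma kernel_lift {K A B : C} (k : Hom K A) (f : Hom A B) : is_kernel k f ->
  forall Z (g : Hom Z A), is_zero_arrow (f ∘ g) -> exists u, k ∘ u = g.
Proof. intros [_ H] Z g E. destruct (H Z g E) as [u [Hu _]]; eauto. Qed.

Lemma zero_image {K A : C} (f : Hom K A) : is_zero_arrow f ->
  exists I (e : Hom K I) (m : Hom I A), image_factorization f e m /\ is_zero_obj I.
Proof.
  intros Hf. destruct Hpt as [Z HZ].
  destruct (zero_obj_hom_to HZ K) as [e _], (zero_obj_hom_from HZ A) as [m _].
  exists Z, e, m. split; [|auto]. split; [|split].
  - apply zero_arrow_unique; auto. apply zero_arrow_through; auto.
  - exists K, (idm K), (zero_hom K K). split.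
    + apply (zero_obj_hom_to_ext HZ).
    + intros W h Eh. destruct (zero_obj_hom_from HZ W) as [u _]. exists u. split.
      * apply zero_arrow_unique. { apply zero_arrow_through; auto. }
        rewrite <- (comp_idr h), Eh. apply zero_arrow_postcomp, zero_hom_zero.
      * intros; apply (zero_obj_hom_from_ext HZ).
  - intros W g h _. apply (zero_obj_hom_to_ext HZ).
Qed.

Hypothesis Hlim : has_finite_limits C.

Lemma pullback_exists {A B D : C} (f : Hom A D) (g : Hom B D) :
  exists P (p1 : Hom P A) (p2 : Hom P B), is_pullback f g p1 p2.
Proof. apply (proj2 Hlim). Qed.

Lemma kernel_exists {A B : C} (f : Hom A B) : exists K (k : Hom K A), is_kernel k f.
Proof.
  destruct Hpt as [Z HZ]. destruct (zero_obj_hom_from HZ B) as [z _].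
  destruct (pullback_exists f z) as [P [k [t Hp]]].
  exists P, k. split.
  - rewrite (proj1 Hp). apply zero_arrow_through; auto.
  - intros W g Hg. destruct (zero_obj_hom_to HZ W) as [t' _].
    assert (E : f ∘ g = z ∘ t').
    { apply zero_arrow_unique; auto. apply zero_arrow_through; auto. }
    destruct (pullback_lift Hp E) as [u [Hu1 Hu2]]. exists u; split; auto.
    intros u' Hu'. apply (pullback_hom_ext Hp); [congruence | apply (zero_obj_hom_to_ext HZ)].
Qed.

(* The equalizer of f and g is the pullback of the two sections <1, f> and <1, g>
   of the product E × W = E ×_0 W. *)
Lemma equalizer_exists {E W : C} (f g : Hom E W) :
  exists M (m : Hom M E), mono m /\ f ∘ m = g ∘ m /\
    forall Z (h : Hom Z E), f ∘ h = g ∘ h -> exists h', m ∘ h' = h.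
Proof.
  destruct Hpt as [Z HZ].
  destruct (zero_obj_hom_to HZ E) as [tE _], (zero_obj_hom_to HZ W) as [tW _].
  destruct (pullback_exists tE tW) as [P [pi1 [pi2 Hp]]].
  assert (Hpair : forall Q (a : Hom Q E) (b : Hom Q W), exists u, pi1 ∘ u = a /\ pi2 ∘ u = b).
  { intros Q a b. apply (pullback_lift Hp). apply (zero_obj_hom_to_ext HZ). }
  destruct (Hpair E (idm E) f) as [uf [Uf1 Uf2]], (Hpair E (idm E) g) as [ug [Ug1 Ug2]].
  destruct (pullback_exists uf ug) as [Q [q1 [q2 Hq]]].
  assert (E12 : q1 = q2).
  { transitivity (pi1 ∘ uf ∘ q1); [rewrite Uf1, comp_idl; auto|].
    rewrite <- comp_assoc, (proj1 Hq), comp_assoc, Ug1, comp_idl; auto. }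
  exists Q, q1. split; [|split].
  - intros V a b Eab. apply (pullback_hom_ext Hq); auto. rewrite <- E12; auto.
  - rewrite <- Uf2, <- Ug2, <- !comp_assoc, (proj1 Hq), E12. reflexivity.
  - intros V h Eh. destruct (pullback_lift Hq (q1 := h) (q2 := h)) as [u [Hu1 _]]; eauto.
    apply (pullback_hom_ext Hp); rewrite !comp_assoc.
    + rewrite Uf1, Ug1; reflexivity.
    + rewrite Uf2, Ug2; auto.
Qed.

Lemma A3_exists {A QX QY : C} (qx : Hom A QX) (qy : Hom A QY) :
  exists A3 (a1 a2 a3 : Hom A3 A), is_A3 qx qy a1 a2 a3.
Proof.
  destruct (pullback_exists qx qx) as [PX [px1 [px2 HPX]]].
  destruct (pullback_exists qy qy) as [PY [py1 [py2 HPY]]].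
  destruct (pullback_exists px2 py1) as [W [w1 [w2 HW]]].
  exists W, (px1 ∘ w1), (px2 ∘ w1), (py2 ∘ w2). split; [|split].
  - rewrite !comp_assoc, (proj1 HPX); auto.
  - rewrite (proj1 HW), !comp_assoc, (proj1 HPY); auto.
  - intros Z b1 b2 b3 E1 E2.
    destruct (pullback_lift HPX E1) as [u1 [U1 U2]].
    destruct (pullback_lift HPY E2) as [u2 [V1 V2]].
    destruct (pullback_lift HW (q1 := u1) (q2 := u2)) as [u [W1 W2]]; [congruence|].
    exists u. split.
    + rewrite <- !comp_assoc, W1, W2; auto.
    + intros v [X1 [X2 X3]]. apply (pullback_hom_ext HW).
      * rewrite W1. apply (pullback_hom_ext HPX); rewrite comp_assoc; congruence.
      * rewrite W2. apply (pullback_hom_ext HPY); rewrite comp_assoc; [|congruence].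
        rewrite <- (proj1 HW). congruence.
Qed.

End PointedFiniteLimits.

Ltac zero_arrow_auto :=
  first [ assumption | apply zero_hom_zero | apply zero_arrow_through; assumption
        | apply zero_arrow_postcomp; zero_arrow_auto | apply zero_arrow_precomp; zero_arrow_auto
        | apply zero_arrow_precomp_assoc; zero_arrow_auto ].
Ltac zero_arrow_eq := apply zero_arrow_unique; zero_arrow_auto.

Section Homological.
Variable C : Category.
Hypothesis HC : homological C.
Let Hpt : pointed C := proj1 HC.
Let Hreg : regular C := proj1 (proj2 HC).
Let Hlim : has_finite_limits C := proj1 Hreg.

Section SplitExtension.
Variables (K E B : C) (k : Hom K E) (p : Hom E B) (s : Hom B E).
Hypotheses (Hps : p ∘ s = idm B) (Hk : is_kernel k p).

(* The split short five lemma, applied to the restriction of p to m. *)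
Lemma split_kernel_mono_iso M (m : Hom M E) :
  mono m -> (exists s', m ∘ s' = s) -> (exists k', m ∘ k' = k) -> is_iso m.
Proof.
  intros Hm [s' Hs'] [k' Hk'].
  assert (Hmk : is_kernel k' (p ∘ m)).
  { split.
    - rewrite <- comp_assoc, Hk'. apply (proj1 Hk).
    - intros Z g Hg. rewrite <- comp_assoc in Hg.
      destruct (proj2 Hk Z (m ∘ g) Hg) as [u [Hu Hu']].
      exists u. split.
      + apply Hm. rewrite comp_assoc, Hk'; auto.
      + intros u' Hu2. apply Hu'. rewrite <- Hk', <- comp_assoc, Hu2; auto. }
  apply (proj2 (proj2 HC) _ _ _ _ _ _ k' (p ∘ m) s' k p s (idm K) m (idm B));
    rewrite ?comp_idl, ?comp_idr; auto using iso_idm.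
  rewrite <- comp_assoc, Hs'; auto.
Qed.

Lemma split_kernel_jointly_epic W (f g : Hom E W) : f ∘ s = g ∘ s -> f ∘ k = g ∘ k -> f = g.
Proof.
  intros Es Ek.
  destruct (equalizer_exists Hpt Hlim f g) as [M [m [Hm [Em Hu]]]].
  destruct (split_kernel_mono_iso Hm (Hu _ s Es) (Hu _ k Ek)) as [n [_ Hn]].
  rewrite <- (comp_idr f), <- (comp_idr g), <- Hn, !comp_assoc, Em; auto.
Qed.

Lemma split_kernel_zero W (f : Hom E W) :
  is_zero_arrow (f ∘ s) -> is_zero_arrow (f ∘ k) -> is_zero_arrow f.
Proof.
  intros H1 H2. rewrite (split_kernel_jointly_epic (g := zero_hom Hpt E W)).
  - apply zero_hom_zero.
  - zero_arrow_eq.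
  - zero_arrow_eq.
Qed.

End SplitExtension.

(* The kernel pair of m is trivial: after pulling it back twice along the regular epi e
   (regular epis being pullback-stable), it factors through the kernel pair of f. *)
Lemma kernel_pair_coequalizer_factor_mono {A B P Q : C} (f : Hom A B) (p1 p2 : Hom P A)
    (e : Hom A Q) (m : Hom Q B) :
  is_pullback f f p1 p2 -> is_coequalizer p1 p2 e -> m ∘ e = f -> mono m.
Proof.
  intros Hp He Hm.
  assert (Re : is_regular_epi e) by (exists P, p1, p2; auto).
  destruct (pullback_exists Hlim m m) as [N [n1 [n2 Hn]]].
  assert (En : n1 = n2).
  { destruct (pullback_exists Hlim n1 e) as [W [w1 [w2 Hw]]].
    destruct (pullback_exists Hlim (n2 ∘ w1) e) as [V [v1 [v2 Hv]]].
    assert (Rw := proj2 (proj2 Hreg) _ _ _ _ _ _ _ _ Hw Re).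
    assert (Rv := proj2 (proj2 Hreg) _ _ _ _ _ _ _ _ Hv Re).
    assert (Ef : f ∘ (w2 ∘ v1) = f ∘ v2).
    { rewrite <- Hm.
      transitivity (m ∘ (n1 ∘ w1 ∘ v1)); [rewrite (proj1 Hw); rassoc; reflexivity|].
      rewrite !comp_assoc, (proj1 Hn), <- (comp_assoc m n2 w1), <- comp_assoc, (proj1 Hv).
      rassoc; reflexivity. }
    destruct (pullback_lift Hp Ef) as [r [Hr1 Hr2]].
    apply (regular_epi_epi Rw), (regular_epi_epi Rv).
    rewrite (proj1 Hw), (proj1 Hv), <- comp_assoc, <- Hr1, <- Hr2, !comp_assoc, (proj1 He).
    reflexivity. }
  intros Z g h Egh. destruct (pullback_lift Hn Egh) as [u [Hu1 Hu2]].
  rewrite <- Hu1, <- Hu2, En; auto.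
Qed.

Lemma extremal_epi_regular {A B : C} (f : Hom A B) :
  (forall M (m : Hom M B) (t : Hom A M), mono m -> f = m ∘ t -> is_iso m) -> is_regular_epi f.
Proof.
  intros Hex.
  destruct (pullback_exists Hlim f f) as [P [p1 [p2 Hp]]].
  destruct (proj1 (proj2 Hreg) _ _ f _ _ _ Hp) as [Q [e He]].
  destruct (proj2 He B f (proj1 Hp)) as [m [Hm _]].
  pose proof (kernel_pair_coequalizer_factor_mono Hp He Hm) as Hmono.
  exists P, p1, p2. rewrite <- Hm. apply coequalizer_comp_iso; eauto.
Qed.

Lemma regular_epi_kernel_pair_coequalizer {A B P : C} (e : Hom A B) (p1 p2 : Hom P A) :
  is_regular_epi e -> is_pullback e e p1 p2 -> is_coequalizer p1 p2 e.
Proof.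
  intros [K [u [v [Hc H]]]] Hp. split; [apply (proj1 Hp)|].
  intros Z h Eh. apply H.
  destruct (pullback_lift Hp Hc) as [w [Hw1 Hw2]].
  rewrite <- Hw1, <- Hw2, !comp_assoc, Eh; auto.
Qed.

(* f coequalizes the kernel pair of e: both projections agree on the diagonal, and on the
   kernel of the second projection, where the first one lands in the kernel of e. *)
Lemma regular_epi_cokernel_lift {A B K W : C} (e : Hom A B) (k : Hom K A) (f : Hom A W) :
  is_regular_epi e -> is_kernel k e -> is_zero_arrow (f ∘ k) -> exists h, h ∘ e = f.
Proof.
  intros He Hk Hfk.
  destruct (pullback_exists Hlim e e) as [P [p1 [p2 Hp]]].
  destruct (proj2 (regular_epi_kernel_pair_coequalizer He Hp) W f) as [h [Hh _]]; eauto.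
  destruct (pullback_diagonal Hp) as [d [Hd1 Hd2]].
  destruct (kernel_exists Hpt Hlim p2) as [L [kk Hkk]].
  pose proof (proj1 Hkk) as Hkk0.
  apply (split_kernel_jointly_epic (s := d) Hd2 Hkk); rassoc.
  - rewrite_comp Hd1; rewrite_comp Hd2; auto.
  - destruct (kernel_lift Hk (g := p1 ∘ kk)) as [w Hw].
    { rewrite comp_assoc, (proj1 Hp). rassoc. zero_arrow_auto. }
    rewrite <- Hw. rassoc. zero_arrow_eq.
Qed.


Section SplitPullback.
Variables (E1 E2 B T : C) (r1 : Hom E1 B) (r2 : Hom E2 B) (p1 : Hom T E1) (p2 : Hom T E2)
  (s1 : Hom E1 T) (s2 : Hom E2 T) (t : Hom B E2).
Hypotheses (HT : is_pullback r1 r2 p1 p2) (Hs1 : p1 ∘ s1 = idm E1) (Hts1 : p2 ∘ s1 = t ∘ r1)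
  (Hs2 : p2 ∘ s2 = idm E2).

Lemma split_pullback_kernel_factor K (k : Hom K T) : is_kernel k p2 -> exists w, s1 ∘ w = k.
Proof.
  intros Hk. pose proof (proj1 Hk).
  destruct (kernel_exists Hpt Hlim r1) as [K1 [k1 Hk1]]. pose proof (proj1 Hk1).
  destruct (kernel_lift Hk1 (g := p1 ∘ k)) as [w Hw].
  { rewrite comp_assoc, (proj1 HT). rassoc. zero_arrow_auto. }
  exists (k1 ∘ w). apply (pullback_hom_ext HT); rassoc.
  - rewrite_comp Hs1. auto.
  - rewrite_comp Hts1. zero_arrow_eq.
Qed.

Lemma split_pullback_jointly_epic W (u v : Hom T W) : u ∘ s1 = v ∘ s1 -> u ∘ s2 = v ∘ s2 -> u = v.
Proof.
  intros Eu1 Eu2. destruct (kernel_exists Hpt Hlim p2) as [K [k Hk]].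
  destruct (split_pullback_kernel_factor Hk) as [w Hw].
  apply (split_kernel_jointly_epic Hs2 Hk); auto.
  rewrite <- Hw, !comp_assoc, Eu1; auto.
Qed.

Lemma split_pullback_mono_iso M (m : Hom M T) :
  mono m -> (exists d, m ∘ d = s1) -> (exists d, m ∘ d = s2) -> is_iso m.
Proof.
  intros Hm [d1 Hd1] Hd2. destruct (kernel_exists Hpt Hlim p2) as [K [k Hk]].
  destruct (split_pullback_kernel_factor Hk) as [w Hw].
  apply (split_kernel_mono_iso Hs2 Hk Hm Hd2). exists (d1 ∘ w). rewrite comp_assoc, Hd1; auto.
Qed.

End SplitPullback.

(* The kernel pair of q is generated by its diagonal and by the kernel <m, 0> of its
   second projection. *)
Lemma kernel_pair_cover_regular_epi {A Q I X0 P S : C} (q : Hom A Q) (pa pb : Hom P A)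
    (m : Hom I A) (e : Hom X0 I) (g : Hom S P) (s1 : Hom A S) (s2 : Hom X0 S) :
  is_pullback q q pa pb -> is_kernel m q -> is_regular_epi e ->
  pa ∘ (g ∘ s1) = idm A -> pb ∘ (g ∘ s1) = idm A ->
  pa ∘ (g ∘ s2) = m ∘ e -> is_zero_arrow (pb ∘ (g ∘ s2)) -> is_regular_epi g.
Proof.
  intros Hp Hm He G1 G2 G3 G4. pose proof (proj1 Hm).
  apply extremal_epi_regular. intros M mm t Hmm Hg.
  destruct (pullback_diagonal Hp) as [d [D1 D2]].
  destruct (kernel_exists Hpt Hlim pb) as [K [kk Hkk]]. pose proof (proj1 Hkk).
  apply (split_kernel_mono_iso D2 Hkk Hmm).
  { exists (t ∘ s1). rewrite comp_assoc, <- Hg. apply (pullback_hom_ext Hp); congruence. }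
  destruct (pullback_lift Hp (q1 := m) (q2 := zero_hom Hpt I A)) as [u0 [U1 U2]].
  { zero_arrow_eq. }
  assert (Eu : mm ∘ (t ∘ s2) = u0 ∘ e).
  { rewrite comp_assoc, <- Hg. apply (pullback_hom_ext Hp); rassoc.
    - rewrite_comp U1. auto.
    - rewrite_comp U2. zero_arrow_eq. }
  destruct (regular_epi_mono_diagonal He Hmm Eu) as [dd Hdd].
  destruct (kernel_lift Hm (g := pa ∘ kk)) as [w Hw].
  { rewrite comp_assoc, (proj1 Hp). rassoc. zero_arrow_auto. }
  exists (dd ∘ w). rewrite comp_assoc, Hdd. apply (pullback_hom_ext Hp); rassoc.
  - rewrite_comp U1. auto.
  - rewrite_comp U2. zero_arrow_eq.
Qed.

Lemma normal_image_kernel_of_cokernel {X A Q I : C} (x : Hom X A) (q : Hom A Q)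
    (e : Hom X I) (m : Hom I A) :
  is_cokernel x q -> image_factorization x e m -> normal_mono m -> is_kernel m q.
Proof.
  intros [Hz Hq] [Ex [He Hm]] [E [g Hg]]. pose proof (proj1 Hg).
  split.
  - rewrite (regular_epi_epi He (u := q ∘ m) (v := zero_hom Hpt I Q)).
    + apply zero_hom_zero.
    + rewrite <- comp_assoc, <- Ex. zero_arrow_eq.
  - intros Z h Hh. apply (proj2 Hg).
    destruct (Hq E g) as [u [Hu _]].
    { rewrite Ex, comp_assoc. zero_arrow_auto. }
    rewrite <- Hu, <- comp_assoc. zero_arrow_auto.
Qed.

Section KernelPairs.
Variables (A QX QY A3 PX PY : C) (qx : Hom A QX) (qy : Hom A QY) (a1 a2 a3 : Hom A3 A)
  (px1 px2 : Hom PX A) (py1 py2 : Hom PY A).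
Hypotheses (HA3 : is_A3 qx qy a1 a2 a3) (HPX : is_pullback qx qx px1 px2)
  (HPY : is_pullback qy qy py1 py2).

Lemma A3_is_pullback (l : Hom A3 PX) (r : Hom A3 PY) :
  px1 ∘ l = a1 -> px2 ∘ l = a2 -> py1 ∘ r = a2 -> py2 ∘ r = a3 -> is_pullback px2 py1 l r.
Proof.
  intros L1 L2 R1 R2. split; [congruence|].
  intros Z q1 q2 Eq.
  destruct (A3_lift HA3 (b1 := px1 ∘ q1) (b2 := px2 ∘ q1) (b3 := py2 ∘ q2)) as [u [U1 [U2 U3]]].
  { rewrite !comp_assoc, (proj1 HPX); auto. }
  { rewrite Eq, !comp_assoc, (proj1 HPY); auto. }
  exists u. split; [split|].
  - apply (pullback_hom_ext HPX); rassoc; [rewrite_comp L1 | rewrite_comp L2]; auto.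
  - apply (pullback_hom_ext HPY); rassoc; [rewrite_comp R1 | rewrite_comp R2]; congruence.
  - intros v [V1 V2]. apply (A3_hom_ext HA3).
    + rewrite U1, <- L1, <- comp_assoc, V1; auto.
    + rewrite U2, <- L2, <- comp_assoc, V1; auto.
    + rewrite U3, <- R2, <- comp_assoc, V2; auto.
Qed.

Lemma pregroupoid_xyy p : is_pregroupoid_structure a1 a2 a3 px1 px2 py1 py2 p ->
  forall Z (t : Hom Z A3) (b1 b2 : Hom Z A),
  a1 ∘ t = b1 -> a2 ∘ t = b2 -> a3 ∘ t = b2 -> p ∘ t = b1.
Proof.
  intros [Hp _] Z t b1 b2 T1 T2 T3.
  destruct (pullback_lift HPX (q1 := b1) (q2 := b2)) as [w [W1 W2]].
  { rewrite <- T1, <- T2, !comp_assoc, (proj1 HA3); auto. }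
  destruct (A3_lift HA3 (b1 := px1) (b2 := px2) (b3 := px2) (proj1 HPX) eq_refl)
    as [r [R1 [R2 R3]]].
  assert (Ht : t = r ∘ w).
  { apply (A3_hom_ext HA3); rassoc; [rewrite_comp R1 | rewrite_comp R2 | rewrite_comp R3];
      congruence. }
  rewrite Ht, comp_assoc, (Hp r R1 R2 R3); auto.
Qed.

Lemma pregroupoid_xxy p : is_pregroupoid_structure a1 a2 a3 px1 px2 py1 py2 p ->
  forall Z (t : Hom Z A3) (b1 b2 : Hom Z A),
  a1 ∘ t = b1 -> a2 ∘ t = b1 -> a3 ∘ t = b2 -> p ∘ t = b2.
Proof.
  intros [_ Hp] Z t b1 b2 T1 T2 T3.
  destruct (pullback_lift HPY (q1 := b1) (q2 := b2)) as [w [W1 W2]].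
  { rewrite <- T2, <- T3, !comp_assoc, (proj1 (proj2 HA3)); auto. }
  destruct (A3_lift HA3 (b1 := py1) (b2 := py1) (b3 := py2) eq_refl (proj1 HPY))
    as [r [R1 [R2 R3]]].
  assert (Ht : t = r ∘ w).
  { apply (A3_hom_ext HA3); rassoc; [rewrite_comp R1 | rewrite_comp R2 | rewrite_comp R3];
      congruence. }
  rewrite Ht, comp_assoc, (Hp r R1 R2 R3); auto.
Qed.

Section StandardSections.
Variables (sR : Hom PX A3) (sS : Hom PY A3).
Hypotheses (R1 : a1 ∘ sR = px1) (R2 : a2 ∘ sR = px2) (R3 : a3 ∘ sR = px2)
  (S2 : a2 ∘ sS = py1) (S3 : a3 ∘ sS = py2).

(* Viewing A3 as PX ×_A PY, sR and sS are the two standard sections. *)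
Lemma A3_split_pullback : exists (l : Hom A3 PX) (r : Hom A3 PY) (dY : Hom A PY),
  is_pullback px2 py1 l r /\ l ∘ sR = idm PX /\ r ∘ sR = dY ∘ px2 /\ r ∘ sS = idm PY.
Proof.
  destruct (pullback_lift HPX (q1 := a1) (q2 := a2) (proj1 HA3)) as [l [L1 L2]].
  destruct (pullback_lift HPY (q1 := a2) (q2 := a3) (proj1 (proj2 HA3))) as [r [Q1 Q2]].
  destruct (pullback_diagonal HPY) as [dY [D1 D2]].
  exists l, r, dY. split; [|split; [|split]].
  - apply A3_is_pullback; auto.
  - apply (pullback_hom_ext HPX); rassoc; [rewrite_comp L1 | rewrite_comp L2]; auto.
  - apply (pullback_hom_ext HPY); rassoc; [rewrite_comp Q1; rewrite_comp D1
      | rewrite_comp Q2; rewrite_comp D2]; auto.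
  - apply (pullback_hom_ext HPY); rassoc; [rewrite_comp Q1 | rewrite_comp Q2]; auto.
Qed.

Lemma A3_sections_jointly_epic W (u v : Hom A3 W) :
  u ∘ sR = v ∘ sR -> u ∘ sS = v ∘ sS -> u = v.
Proof.
  destruct A3_split_pullback as [l [r [dY [Hpb [Hl [Hr Hs]]]]]].
  exact (split_pullback_jointly_epic Hpb Hl Hr Hs (u := u) (v := v)).
Qed.

Lemma A3_sections_mono_iso M (m : Hom M A3) :
  mono m -> (exists d, m ∘ d = sR) -> (exists d, m ∘ d = sS) -> is_iso m.
Proof.
  destruct A3_split_pullback as [l [r [dY [Hpb [Hl [Hr Hs]]]]]].
  exact (split_pullback_mono_iso Hpb Hl Hr Hs (m := m)).
Qed.

End StandardSections.

Lemma pregroupoid_structure_unique p p' :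
  is_pregroupoid_structure a1 a2 a3 px1 px2 py1 py2 p ->
  is_pregroupoid_structure a1 a2 a3 px1 px2 py1 py2 p' -> p = p'.
Proof.
  intros Hp Hp'.
  destruct (A3_lift HA3 (b1 := px1) (b2 := px2) (b3 := px2) (proj1 HPX) eq_refl)
    as [sR [R1 [R2 R3]]].
  destruct (A3_lift HA3 (b1 := py1) (b2 := py1) (b3 := py2) eq_refl (proj1 HPY))
    as [sS [S1 [S2 S3]]].
  apply (A3_sections_jointly_epic R1 R2 R3 S2 S3).
  - rewrite (proj1 Hp sR), (proj1 Hp' sR); auto.
  - rewrite (proj2 Hp sS S1 S2 S3), (proj2 Hp' sS S1 S2 S3); auto.
Qed.

End KernelPairs.

End Homological.

Section Colimits.
Variable C : Category.
Hypothesis HF : has_finite_colimits C.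

Lemma coproduct_exists (A B : C) :
  exists S (i1 : Hom A S) (i2 : Hom B S), is_coproduct i1 i2.
Proof. apply (proj2 HF). Qed.

Lemma coproduct3_exists (A B D : C) :
  exists S (i1 : Hom A S) (i2 : Hom B S) (i3 : Hom D S), is_coproduct3 i1 i2 i3.
Proof.
  destruct (coproduct_exists A B) as [S1 [j1 [j2 H1]]].
  destruct (coproduct_exists S1 D) as [S [k1 [k2 H2]]].
  exists S, (k1 ∘ j1), (k1 ∘ j2), k2. intros Z f g h.
  destruct (coproduct_copair H1 f g) as [u1 [U1 U2]].
  destruct (coproduct_copair H2 u1 h) as [u [V1 V2]].
  exists u. split.
  - rewrite !comp_assoc, V1; auto.
  - intros v [W1 [W2 W3]]. apply (coproduct_hom_ext H2); [|congruence].
    apply (coproduct_hom_ext H1); rewrite <- !comp_assoc; [rewrite W1 | rewrite W2];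
      rewrite comp_assoc, V1; auto.
Qed.

Hypothesis Hpt : pointed C.

Lemma cokernel_exists {X A : C} (x : Hom X A) : exists Q (q : Hom A Q), is_cokernel x q.
Proof.
  destruct (proj2 (proj2 HF) X A x (zero_hom Hpt X A)) as [Q [q [Hc H]]].
  exists Q, q. split.
  - rewrite Hc. zero_arrow_auto.
  - intros Z g Hg. apply H. zero_arrow_eq.
Qed.

End Colimits.

Section Comparison.
Variable C : Category.

Lemma copair_cokernel_eq {A X SX Q : C} (j1 : Hom A SX) (j2 : Hom X SX) (x : Hom X A)
    (q : Hom A Q) (r f : Hom SX A) :
  is_coproduct j1 j2 -> is_zero_arrow (q ∘ x) -> r ∘ j1 = idm A -> is_zero_arrow (r ∘ j2) ->
  f ∘ j1 = idm A -> f ∘ j2 = x -> q ∘ f = q ∘ r.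
Proof.
  intros HX Hq R1 R2 F1 F2. apply (coproduct_hom_ext HX); rassoc.
  - rewrite_comp F1. rewrite_comp R1. auto.
  - rewrite_comp F2. zero_arrow_eq.
Qed.

Lemma comparison_exists (Hpt : pointed C) {A X Y S SX SY T : C}
    (i1 : Hom A S) (i2 : Hom X S) (i3 : Hom Y S) (j1 : Hom A SX) (j2 : Hom X SX)
    (l1 : Hom A SY) (l2 : Hom Y SY) (rX : Hom SX A) (rY : Hom SY A)
    (pr1 : Hom T SX) (pr2 : Hom T SY) :
  is_coproduct3 i1 i2 i3 -> rX ∘ j1 = idm A -> is_zero_arrow (rX ∘ j2) ->
  rY ∘ l1 = idm A -> is_zero_arrow (rY ∘ l2) -> is_pullback rX rY pr1 pr2 ->
  exists phi : Hom S T,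
    pr1 ∘ (phi ∘ i1) = j1 /\ pr1 ∘ (phi ∘ i2) = j2 /\ is_zero_arrow (pr1 ∘ (phi ∘ i3)) /\
    pr2 ∘ (phi ∘ i1) = l1 /\ is_zero_arrow (pr2 ∘ (phi ∘ i2)) /\ pr2 ∘ (phi ∘ i3) = l2.
Proof.
  intros H3 RX1 RX2 RY1 RY2 HT.
  destruct (coproduct3_copair H3 j1 j2 (zero_hom Hpt Y SX)) as [c1 [E11 [E12 E13]]].
  destruct (coproduct3_copair H3 l1 (zero_hom Hpt X SY) l2) as [c2 [E21 [E22 E23]]].
  destruct (pullback_lift HT (q1 := c1) (q2 := c2)) as [phi [Phi1 Phi2]].
  { apply (coproduct3_hom_ext H3); rassoc;
      [rewrite_comp E11; rewrite_comp E21; congruence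
      | rewrite_comp E12; rewrite_comp E22 | rewrite_comp E13; rewrite_comp E23]; zero_arrow_eq. }
  exists phi. rewrite !(comp_eq_r Phi1), !(comp_eq_r Phi2), E11, E12, E13, E21, E22, E23.
  split; [|split; [|split; [|split; [|split]]]]; auto using zero_hom_zero.
Qed.

Lemma comparison_section {A X S SX SY T : C} (i1 : Hom A S) (i2 : Hom X S)
    (j1 : Hom A SX) (j2 : Hom X SX) (l1 : Hom A SY) (rX : Hom SX A)
    (pr1 : Hom T SX) (pr2 : Hom T SY) (phi : Hom S T) (gX : Hom SX S) :
  is_coproduct j1 j2 -> rX ∘ j1 = idm A -> is_zero_arrow (rX ∘ j2) ->
  pr1 ∘ (phi ∘ i1) = j1 -> pr1 ∘ (phi ∘ i2) = j2 -> pr2 ∘ (phi ∘ i1) = l1 ->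
  is_zero_arrow (pr2 ∘ (phi ∘ i2)) -> gX ∘ j1 = i1 -> gX ∘ j2 = i2 ->
  pr1 ∘ (phi ∘ gX) = idm SX /\ pr2 ∘ (phi ∘ gX) = l1 ∘ rX.
Proof.
  intros HX R1 R2 F1 F2 F3 F4 G1 G2. split; apply (coproduct_hom_ext HX); rassoc.
  - rewrite_comp G1. auto.
  - rewrite_comp G2. auto.
  - rewrite_comp G1. rewrite_comp R1. auto.
  - rewrite_comp G2. zero_arrow_eq.
Qed.

End Comparison.

(* With ψ = ⟨[1,x] π1 φ, [1,0] π1 φ, [1,y] π2 φ⟩ : A+X+Y → A3, the pregroupoid laws give
   p ψ = [1,x,y], while ψ vanishes on the kernel of φ. *)
Lemma pregroupoid_commutator_zero (C : Category) (HC : homological C)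
    (HF : has_finite_colimits C) (X Y A : C) (x : Hom X A) (y : Hom Y A) :
  admits_pregroupoid x y -> commutator1_is_zero x y.
Proof.
  pose proof (proj1 HC) as Hpt. pose proof (proj1 (proj1 (proj2 HC))) as Hlim.
  intros Ha S i1 i2 i3 H3 SX j1 j2 HX SY l1 l2 HY rX RX1 RX2 rY RY1 RY2 P pr1 pr2 HP
    phi F1 F2 F3 F4 F5 F6 K k Hk c C1 C2 C3.
  rassoc in F1; rassoc in F2; rassoc in F3; rassoc in F4; rassoc in F5; rassoc in F6.
  pose proof (proj1 Hk) as Hk0.
  apply (zero_image Hpt).
  destruct (cokernel_exists HF Hpt x) as [QX [qx Hqx]], (cokernel_exists HF Hpt y) as [QY [qy Hqy]].
  destruct (pullback_exists Hlim qx qx) as [PX [px1 [px2 HPX]]].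
  destruct (pullback_exists Hlim qy qy) as [PY [py1 [py2 HPY]]].
  destruct (A3_exists Hlim qx qy) as [A3 [a1 [a2 [a3 HA3]]]].
  destruct (Ha QX qx QY qy Hqx Hqy A3 a1 a2 a3 HA3 PX px1 px2 HPX PY py1 py2 HPY) as [p Hp].
  destruct (coproduct_copair HX (idm A) x) as [fX [FX1 FX2]].
  destruct (coproduct_copair HY (idm A) y) as [fY [FY1 FY2]].
  pose proof (copair_cokernel_eq HX (proj1 Hqx) RX1 RX2 FX1 FX2) as EX.
  pose proof (eq_sym (copair_cokernel_eq HY (proj1 Hqy) RY1 RY2 FY1 FY2)) as EY.
  destruct (A3_lift HA3 (b1 := fX ∘ (pr1 ∘ phi)) (b2 := rX ∘ (pr1 ∘ phi)) (b3 := fY ∘ (pr2 ∘ phi)))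
    as [psi [Psi1 [Psi2 Psi3]]].
  { rassoc. rewrite_comp EX. auto. }
  { rassoc. rewrite_comp (proj1 HP). rewrite_comp EY. auto. }
  assert (Hpsi : p ∘ psi = c).
  { apply (coproduct3_hom_ext H3); rassoc.
    - rewrite C1. apply (pregroupoid_xyy HA3 HPX Hp (b2 := idm A)).
      + rewrite_comp Psi1. rewrite F1. auto.
      + rewrite_comp Psi2. rewrite F1. auto.
      + rewrite_comp Psi3. rewrite F4. auto.
    - rewrite C2. apply (pregroupoid_xyy HA3 HPX Hp (b2 := zero_hom Hpt X A)).
      + rewrite_comp Psi1. rewrite F2. auto.
      + rewrite_comp Psi2. rewrite F2. zero_arrow_eq.
      + rewrite_comp Psi3. zero_arrow_eq.
    - rewrite C3. apply (pregroupoid_xxy HA3 HPY Hp (b1 := zero_hom Hpt Y A)).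
      + rewrite_comp Psi1. zero_arrow_eq.
      + rewrite_comp Psi2. rewrite_comp (proj1 HP). rewrite F6. zero_arrow_eq.
      + rewrite_comp Psi3. rewrite F6. auto. }
  assert (Hpsik : psi ∘ k = zero_hom Hpt K A3).
  { apply (A3_hom_ext HA3); rassoc; [rewrite_comp Psi1 | rewrite_comp Psi2 | rewrite_comp Psi3];
      zero_arrow_eq. }
  rewrite <- Hpsi. rassoc. rewrite Hpsik. zero_arrow_auto.
Qed.

Section CommutatorZeroPregroupoid.
Variable C : Category.
Hypothesis HC : homological C.
Let Hpt : pointed C := proj1 HC.
Let Hlim : has_finite_limits C := proj1 (proj1 (proj2 HC)).

Variables (A X Y QX QY Ix Iy : C) (x : Hom X A) (y : Hom Y A) (qx : Hom A QX) (qy : Hom A QY)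
  (eX : Hom X Ix) (mX : Hom Ix A) (eY : Hom Y Iy) (mY : Hom Iy A).
Hypotheses (Ex : x = mX ∘ eX) (Rex : is_regular_epi eX) (Kx : is_kernel mX qx)
  (Ey : y = mY ∘ eY) (Rey : is_regular_epi eY) (Ky : is_kernel mY qy).

Variables (A3 PX PY : C) (a1 a2 a3 : Hom A3 A) (px1 px2 : Hom PX A) (py1 py2 : Hom PY A).
Hypotheses (HA3 : is_A3 qx qy a1 a2 a3) (HPX : is_pullback qx qx px1 px2)
  (HPY : is_pullback qy qy py1 py2).

(* In the intended instance SX = A+X, SY = A+Y, S = A+X+Y, rX = [1,0], fX = [1,x],
   rY = [1,0], fY = [1,y], gX = [ι1,ι2], gY = [ι1,ι3], c = [1,x,y], and T = (A+X) ×_A (A+Y);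
   only the equations listed below are used. *)
Variables (SX SY T S : C) (j1 : Hom A SX) (j2 : Hom X SX) (l1 : Hom A SY) (l2 : Hom Y SY)
  (rX fX : Hom SX A) (rY fY : Hom SY A) (pr1 : Hom T SX) (pr2 : Hom T SY)
  (phi : Hom S T) (gX : Hom SX S) (gY : Hom SY S) (c : Hom S A).
Hypotheses (RX1 : rX ∘ j1 = idm A) (RX2 : is_zero_arrow (rX ∘ j2))
  (RY1 : rY ∘ l1 = idm A) (RY2 : is_zero_arrow (rY ∘ l2))
  (FX1 : fX ∘ j1 = idm A) (FX2 : fX ∘ j2 = x) (FY1 : fY ∘ l1 = idm A) (FY2 : fY ∘ l2 = y)
  (HT : is_pullback rX rY pr1 pr2)
  (PG1 : pr1 ∘ (phi ∘ gX) = idm SX) (PG2 : pr2 ∘ (phi ∘ gX) = l1 ∘ rX)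
  (PG3 : pr2 ∘ (phi ∘ gY) = idm SY) (PG4 : pr1 ∘ (phi ∘ gY) = j1 ∘ rY)
  (CX : c ∘ gX = fX) (CY : c ∘ gY = fY)
  (Hc : forall K (k : Hom K S), is_kernel k phi -> is_zero_arrow (c ∘ k)).

Variables (alpha : Hom SX PX) (beta : Hom SY PY) (theta : Hom T A3).
Hypotheses (A1 : px1 ∘ alpha = fX) (A2 : px2 ∘ alpha = rX)
  (B1 : py1 ∘ beta = rY) (B2 : py2 ∘ beta = fY)
  (Th1 : a1 ∘ theta = fX ∘ pr1) (Th2 : a2 ∘ theta = rX ∘ pr1) (Th3 : a3 ∘ theta = fY ∘ pr2).

Lemma alpha_regular_epi : is_regular_epi alpha.
Proof.
  apply (kernel_pair_cover_regular_epi HC (s1 := j1) (s2 := j2) HPX Kx Rex); rassoc;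
    [rewrite_comp A1 | rewrite_comp A2 | rewrite_comp A1 | rewrite_comp A2]; congruence.
Qed.

Lemma beta_regular_epi : is_regular_epi beta.
Proof.
  apply (kernel_pair_cover_regular_epi HC (s1 := l1) (s2 := l2) (pullback_sym HPY) Ky Rey); rassoc;
    [rewrite_comp B2 | rewrite_comp B1 | rewrite_comp B2 | rewrite_comp B1]; congruence.
Qed.

Lemma theta_phi_gX (t : Hom PX A3) :
  a1 ∘ t = px1 -> a2 ∘ t = px2 -> a3 ∘ t = px2 -> t ∘ alpha = theta ∘ (phi ∘ gX).
Proof.
  intros T1 T2 T3. apply (A3_hom_ext HA3); rassoc.
  - rewrite_comp T1. rewrite_comp Th1. rewrite_comp PG1. auto.
  - rewrite_comp T2. rewrite_comp Th2. rewrite_comp PG1. auto.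
  - rewrite_comp T3. rewrite_comp Th3. rewrite_comp PG2. rewrite_comp FY1. auto.
Qed.

Lemma theta_phi_gY (t : Hom PY A3) :
  a1 ∘ t = py1 -> a2 ∘ t = py1 -> a3 ∘ t = py2 -> t ∘ beta = theta ∘ (phi ∘ gY).
Proof.
  intros T1 T2 T3. apply (A3_hom_ext HA3); rassoc.
  - rewrite_comp T1. rewrite_comp Th1. rewrite_comp PG4. rewrite_comp FX1. auto.
  - rewrite_comp T2. rewrite_comp Th2. rewrite_comp PG4. rewrite_comp RX1. auto.
  - rewrite_comp T3. rewrite_comp Th3. rewrite_comp PG3. auto.
Qed.

Lemma phi_regular_epi : is_regular_epi phi.
Proof.
  apply (extremal_epi_regular HC). intros M m t Hm Hphi.
  apply (split_pullback_mono_iso HC HT PG1 PG2 PG3 Hm);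
    [exists (t ∘ gX) | exists (t ∘ gY)]; rewrite comp_assoc, <- Hphi; auto.
Qed.

Lemma theta_regular_epi : is_regular_epi theta.
Proof.
  apply (extremal_epi_regular HC). intros M m t Hm Htheta.
  destruct (A3_lift HA3 (b1 := px1) (b2 := px2) (b3 := px2) (proj1 HPX) eq_refl)
    as [sR [R1 [R2 R3]]].
  destruct (A3_lift HA3 (b1 := py1) (b2 := py1) (b3 := py2) eq_refl (proj1 HPY))
    as [sS [S1 [S2 S3]]].
  apply (A3_sections_mono_iso HC HA3 HPX HPY R1 R2 R3 S2 S3 Hm).
  - apply (regular_epi_mono_diagonal alpha_regular_epi Hm (a := t ∘ (phi ∘ gX))).
    rewrite (theta_phi_gX R1 R2 R3), Htheta. rassoc. auto.
  - apply (regular_epi_mono_diagonal beta_regular_epi Hm (a := t ∘ (phi ∘ gY))).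
    rewrite (theta_phi_gY S1 S2 S3), Htheta. rassoc. auto.
Qed.


(* The kernel of θ is split over the kernel of β by φ gY, with complementary part
   inside the image of φ gX; q kills both parts since q φ gX = px1 α and q φ gY = py2 β. *)
Lemma factor_kills_kernel_theta (q : Hom T A) : q ∘ phi = c ->
  forall Kt (kt : Hom Kt T), is_kernel kt theta -> is_zero_arrow (q ∘ kt).
Proof.
  intros Hq Kt kt Hkt. pose proof (proj1 Hkt).
  destruct (kernel_exists Hpt Hlim beta) as [Kb [kb Hkb]]. pose proof (proj1 Hkb).
  destruct (A3_lift HA3 (b1 := py1) (b2 := py1) (b3 := py2) eq_refl (proj1 HPY))
    as [sS [S1 [S2 S3]]].
  destruct (kernel_lift Hkb (g := pr2 ∘ kt)) as [v Hv].
  { rewrite (pullback_hom_ext HPY (u := beta ∘ (pr2 ∘ kt)) (v := zero_hom Hpt Kt PY));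
      [zero_arrow_auto | rassoc ..].
    - rewrite_comp B1. rewrite_comp (eq_sym (proj1 HT)). rewrite_comp (eq_sym Th2). zero_arrow_eq.
    - rewrite_comp B2. rewrite_comp (eq_sym Th3). zero_arrow_eq. }
  destruct (kernel_lift Hkt (g := phi ∘ (gY ∘ kb))) as [s Hs].
  { rewrite_comp (eq_sym (theta_phi_gY S1 S2 S3)). zero_arrow_auto. }
  assert (Hvs : v ∘ s = idm Kb).
  { apply (kernel_mono Hkb). rassoc. rewrite_comp Hv. rewrite_comp Hs. rewrite_comp PG3. auto. }
  destruct (kernel_exists Hpt Hlim v) as [Kv [kv Hkv]]. pose proof (proj1 Hkv).
  apply (split_kernel_zero HC Hvs Hkv); rassoc.
  - rewrite_comp Hs. rewrite_comp Hq. rewrite_comp CY. rewrite_comp (eq_sym B2). zero_arrow_auto.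
  - assert (Ekv : kt ∘ kv = phi ∘ (gX ∘ (pr1 ∘ (kt ∘ kv)))).
    { apply (pullback_hom_ext HT); rassoc.
      - rewrite_comp PG1. auto.
      - rewrite_comp PG2. rewrite_comp (proj1 HT). rewrite_comp (eq_sym Hv). zero_arrow_eq. }
    rewrite Ekv. rewrite_comp Hq. rewrite_comp CX. rewrite_comp (eq_sym Th1). zero_arrow_auto.
Qed.

Lemma pregroupoid_of_commutator_zero :
  exists p, is_pregroupoid_structure a1 a2 a3 px1 px2 py1 py2 p.
Proof.
  destruct (kernel_exists Hpt Hlim phi) as [K [k Hk]].
  destruct (regular_epi_cokernel_lift HC phi_regular_epi Hk (Hc Hk)) as [q Hq].
  destruct (kernel_exists Hpt Hlim theta) as [Kt [kt Hkt]].
  destruct (regular_epi_cokernel_lift HC theta_regular_epi Hkt (factor_kills_kernel_theta Hq Hkt))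
    as [p Hp].
  exists p. split; intros t T1 T2 T3.
  - apply (regular_epi_epi alpha_regular_epi). rassoc.
    rewrite (theta_phi_gX T1 T2 T3). rewrite_comp Hp. rewrite_comp Hq. congruence.
  - apply (regular_epi_epi beta_regular_epi). rassoc.
    rewrite (theta_phi_gY T1 T2 T3). rewrite_comp Hp. rewrite_comp Hq. congruence.
Qed.

End CommutatorZeroPregroupoid.

Lemma commutator_zero_pregroupoid (C : Category) (HC : homological C)
    (HF : has_finite_colimits C) (X Y A : C) (x : Hom X A) (y : Hom Y A) :
  image_is_normal_mono x -> image_is_normal_mono y ->
  commutator1_is_zero x y -> admits_pregroupoid x y.
Proof.
  pose proof (proj1 HC) as Hpt. pose proof (proj1 (proj1 (proj2 HC))) as Hlim.
  intros [Ix [eX [mX [Fx Nx]]]] [Iy [eY [mY [Fy Ny]]]] Hc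
    QX qx QY qy Hqx Hqy A3 a1 a2 a3 HA3 PX px1 px2 HPX PY py1 py2 HPY.
  pose proof (normal_image_kernel_of_cokernel HC Hqx Fx Nx) as Kx.
  pose proof (normal_image_kernel_of_cokernel HC Hqy Fy Ny) as Ky.
  destruct Fx as [Ex [Rex _]], Fy as [Ey [Rey _]].
  destruct (coproduct3_exists HF A X Y) as [S [i1 [i2 [i3 H3]]]].
  destruct (coproduct_exists HF A X) as [SX [j1 [j2 HX]]].
  destruct (coproduct_exists HF A Y) as [SY [l1 [l2 HY]]].
  destruct (coproduct_copair HX (idm A) (zero_hom Hpt X A)) as [rX [RX1 RX2]].
  destruct (coproduct_copair HY (idm A) (zero_hom Hpt Y A)) as [rY [RY1 RY2]].
  assert (RX2' : is_zero_arrow (rX ∘ j2)) by (rewrite RX2; apply zero_hom_zero).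
  assert (RY2' : is_zero_arrow (rY ∘ l2)) by (rewrite RY2; apply zero_hom_zero).
  destruct (coproduct_copair HX (idm A) x) as [fX [FX1 FX2]].
  destruct (coproduct_copair HY (idm A) y) as [fY [FY1 FY2]].
  destruct (coproduct_copair HX i1 i2) as [gX [GX1 GX2]].
  destruct (coproduct_copair HY i1 i3) as [gY [GY1 GY2]].
  destruct (coproduct3_copair H3 (idm A) x y) as [c [C1 [C2 C3]]].
  destruct (pullback_exists Hlim rX rY) as [T [pr1 [pr2 HT]]].
  destruct (comparison_exists Hpt H3 RX1 RX2' RY1 RY2' HT)
    as [phi [F1 [F2 [F3 [F4 [F5 F6]]]]]].
  destruct (comparison_section HX RX1 RX2' F1 F2 F4 F5 GX1 GX2) as [PG1 PG2].
  destruct (comparison_section HY RY1 RY2' F4 F6 F1 F3 GY1 GY2) as [PG3 PG4].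
  assert (Hck : forall K (k : Hom K S), is_kernel k phi -> is_zero_arrow (c ∘ k)).
  { intros K k Hk.
    destruct (Hc S i1 i2 i3 H3 SX j1 j2 HX SY l1 l2 HY rX RX1 RX2' rY RY1 RY2' T pr1 pr2 HT phi)
      with (K := K) (k := k) (c := c) as [I [e [m [[Ecm _] HI]]]]; rassoc; auto.
    rewrite Ecm. zero_arrow_auto. }
  assert (CX : c ∘ gX = fX).
  { apply (coproduct_hom_ext HX); rassoc; [rewrite_comp GX1 | rewrite_comp GX2]; congruence. }
  assert (CY : c ∘ gY = fY).
  { apply (coproduct_hom_ext HY); rassoc; [rewrite_comp GY1 | rewrite_comp GY2]; congruence. }
  pose proof (copair_cokernel_eq HX (proj1 Hqx) RX1 RX2' FX1 FX2) as EX.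
  pose proof (eq_sym (copair_cokernel_eq HY (proj1 Hqy) RY1 RY2' FY1 FY2)) as EY.
  destruct (pullback_lift HPX EX) as [alpha [A1 A2]].
  destruct (pullback_lift HPY EY) as [beta [B1 B2]].
  destruct (A3_lift HA3 (b1 := fX ∘ pr1) (b2 := rX ∘ pr1) (b3 := fY ∘ pr2))
    as [theta [Th1 [Th2 Th3]]].
  { rewrite !comp_assoc, EX; auto. }
  { rewrite (proj1 HT), !comp_assoc, EY; auto. }
  exact (pregroupoid_of_commutator_zero HC Ex Rex Kx Ey Rey Ky HA3 HPX HPY RX1 RX2' RY1 RY2'
    FX1 FX2 FY1 FY2 HT PG1 PG2 PG3 PG4 CX CY Hck A1 A2 B1 B2 Th1 Th2 Th3).
Qed.

Theorem corollary2p6 (C : Category) (HC : homological C)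
    (HF : has_finite_colimits C)
    (X Y A : C) (x : Hom X A) (y : Hom Y A)
    (Hx : image_is_normal_mono x) (Hy : image_is_normal_mono y) :
  (admits_pregroupoid x y <-> admits_unique_pregroupoid x y) /\
  (admits_pregroupoid x y <-> commutator1_is_zero x y).
Proof.
  split; split.
  - intros Ha QX qx QY qy Hqx Hqy A3 a1 a2 a3 HA3 PX px1 px2 HPX PY py1 py2 HPY.
    destruct (Ha QX qx QY qy Hqx Hqy A3 a1 a2 a3 HA3 PX px1 px2 HPX PY py1 py2 HPY) as [p Hp].
    exists p. split; auto. intros p'. exact (pregroupoid_structure_unique HC HA3 HPX HPY Hp).
  - intros Hu QX qx QY qy Hqx Hqy A3 a1 a2 a3 HA3 PX px1 px2 HPX PY py1 py2 HPY.
    destruct (Hu QX qx QY qy Hqx Hqy A3 a1 a2 a3 HA3 PX px1 px2 HPX PY py1 py2 HPY)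
      as [p [Hp _]].
    eauto.
  - apply (pregroupoid_commutator_zero HC HF).
  - apply (commutator_zero_pregroupoid HC HF Hx Hy).
Qed.
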